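(* Let $n\geq 2$ and let $L'_n$ be the graph of the $\alpha,\omega$-dicyclobutadieno derivative of $[n-1]$-phenylene (defined in the context). Then the base polynomial counting distances between pairs consisting of a degree-2 vertex and a degree-3 vertex of $L'_n$ is \begin{eqnarray*} H^{2,3}_{b}(L'_{n}) &=& 4nx+4\sum_{k=2}^{n-1}(n-k+2)x^{3k-2}+4\sum_{k=1}^{n-1}(2n-2k)x^{3k-1}\\ &&+4\sum_{k=1}^{n-1}(n-k)x^{3k}+4x^{3n-2}. \end{eqnarray*}
   Context: All graphs are finite, simple and connected; $d(u,v)$ denotes the shortest-path distance and $d_u$ the degree of a vertex $u$. For a graph $G$ and degrees $p\le q$, the base polynomial is $H^{p,q}_{b}(G)=\sum x^{d(u,v)}$, where the sum runs over all unordered pairs $\{u,v\}$ of distinct vertices of $G$ such that one of $u,v$ has degree $p$ and the other has degree $q$. Construction of $L'_n$ ($n\ge 2$): take $n-1$ hexagons $H_1,\dots,H_{n-1}$, hexagon $H_i$ being the 6-cycle $a_i b_i c_i d_i e_i f_i a_i$, and for $i=1,\dots,n-2$ add edges $b_i f_{i+1}$ and $c_i e_{i+1}$ (so consecutive hexagons are joined by the 4-cycle $b_i c_i e_{i+1} f_{i+1}$). Then add four new vertices $p,q,r,s$ with edges $pq$, $pf_1$, $qe_1$ (forming the 4-cycle $f_1 e_1 q p$) and $rs$, $rb_{n-1}$, $sc_{n-1}$ (forming the 4-cycle $b_{n-1} c_{n-1} s r$). Thus $L'_n$ has $n-1$ hexagons and $n$ squares, $2n+2$ vertices of degree 2 and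 $4n-4$ vertices of degree 3. *)

From mathcomp Require Import all_boot all_order all_algebra.
Set Implicit Arguments. Unset Strict Implicit. Unset Printing Implicit Defensive.
Import GRing.Theory.
Local Open Scope ring_scope.

Section Generic.
Variable T : finType.
Variable e : rel T.

Definition deg (u : T) : nat := #|[pred v | e u v]|.

Definition walk_len (k : nat) (u v : T) : bool :=
  [exists p : k.-tuple T, path e u p && (last u p == v)].

(* shortest-path distance: least k admitting a walk of length k
   (for a connected graph this is attained with k < #|T|) *)
Definition dist (u v : T) : nat :=
  find (fun k => walk_len k u v) (iota 0 #|T|).

(* Unordered pairs are enumerated once via enum_rank u < enum_rank v. *)
Definition base_poly (p q : nat) : {poly int} :=
  \sum_(u : T) \sum_(v : T | (enum_rank u < enum_rank v)%N &&
      (((deg u == p) && (deg v == q)) || ((deg u == q) && (deg v == p))))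
    'X^(dist u v).
End Generic.

(* vertices: inl (i, j) is vertex j of hexagon H_{i+1} (i < n-1), with
   j = 0,1,2,3,4,5 standing for a,b,c,d,e,f; inr 0,1,2,3 are p,q,r,s. *)
Definition LV (n : nat) : finType := ('I_n.-1 * 'I_6 + 'I_4)%type.

Definition Ladj (n : nat) (x y : LV n) : bool :=
  match x, y with
  | inl (i, a), inl (j, b) =>
      ((i == j :> nat) && (b == (a.+1 %% 6)%N :> nat))
      || ((j == i.+1 :> nat) &&
          (((a == 1%N :> nat) && (b == 5%N :> nat))
           || ((a == 2%N :> nat) && (b == 4%N :> nat))))
  | inr s, inr t =>
      ((s == 0%N :> nat) && (t == 1%N :> nat))
      || ((s == 2%N :> nat) && (t == 3%N :> nat))
  | inr s, inl (j, b) =>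
      [|| [&& s == 0%N :> nat, j == 0%N :> nat & b == 5%N :> nat],
          [&& s == 1%N :> nat, j == 0%N :> nat & b == 4%N :> nat],
          [&& s == 2%N :> nat, j == (n - 2)%N :> nat & b == 1%N :> nat]
        | [&& s == 3%N :> nat, j == (n - 2)%N :> nat & b == 2%N :> nat]]
  | inl _, inr _ => false
  end.

Definition Ledge (n : nat) : rel (LV n) := fun x y => Ladj x y || Ladj y x.

From mathcomp Require Import all_boot all_order all_algebra zify ring.
Set Implicit Arguments. Unset Strict Implicit. Unset Printing Implicit Defensive.

(* Put a_i, b_i, c_i, d_i, e_i, f_i at the horizontal positions 3i+2, 3i+3, 3i+3, 3i+2,
   3i+1, 3i+1 (hexagons indexed from 0), p, q at 0 and r, s at 3n-2, and split the vertices
   into a lower side {a, b, f, p, r} and an upper side {c, d, e, q, s}.  Then L'_n is a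
   ladder on the positions 0 .. 3n-2 whose rungs are the positions not congruent to 2
   mod 3.  The degree-2 vertices lie at the two ends and at the rungless positions 3j+2,
   the degree-3 vertices at 3j+1 and 3j+3; as every degree-3 vertex carries a rung, the
   distance from a degree-2 to a degree-3 vertex is the horizontal distance, plus one
   when the sides differ.  So H^{2,3}_b = (2 + 2x) * sum of x^|s - t| over degree-2
   positions s and degree-3 positions t, and the closed form follows by summing
   geometric progressions in x^3. *)

Section Walks.
Variables (T : finType) (e : rel T).

Lemma walk_len0 u : walk_len e 0 u u.
Proof. by apply/existsP; exists [tuple]; rewrite /= eqxx. Qed.

Lemma walk_len_rcons k u v w : walk_len e k u v -> e v w -> walk_len e k.+1 u w.
Proof.
case/existsP=> p /andP[pth /eqP lst] evw; apply/existsP; exists (rcons_tuple p w).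
by rewrite /= rcons_path last_rcons pth lst evw eqxx.
Qed.

Lemma walk_len_cons k u v w : e u w -> walk_len e k w v -> walk_len e k.+1 u v.
Proof.
move=> euw /existsP[p /andP[pth lst]]; apply/existsP; exists [tuple of w :: p].
by rewrite /= euw pth.
Qed.

Lemma walk_len_sym k u v : symmetric e -> walk_len e k u v -> walk_len e k v u.
Proof.
move=> sym_e /existsP[p /andP[pth /eqP lst]]; apply/existsP.
have sz : size (rev (belast u p)) == k by rewrite size_rev size_belast size_tuple.
exists (Tuple sz); rewrite /= -lst rev_path (eq_path (e' := e)) ?pth //.
case: (tval p) => [|x s] //=; by rewrite rev_cons last_rcons.
Qed.

Lemma dist_sym u v : symmetric e -> dist e u v = dist e v u.
Proof.
move=> sym_e; apply: eq_find => k.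
by apply/idP/idP; apply: walk_len_sym.
Qed.

Lemma walk_len_potential (g : T -> nat) k u v : g u = 0 ->
  (forall a b, e a b -> g b <= (g a).+1) -> walk_len e k u v -> g v <= k.
Proof.
move=> gu0 g_lip /existsP[p /andP[pth /eqP <-]].
suff: g (last u p) <= g u + size p by rewrite gu0 size_tuple.
elim: (tval p) u pth {gu0} => [|b s IH] a /=; first by rewrite addn0.
by case/andP=> /g_lip gab /IH; lia.
Qed.

Lemma dist_eq_potential (g : T -> nat) k u v :
  walk_len e k u v -> k < #|T| -> g u = 0 -> g v = k ->
  (forall a b, e a b -> g b <= (g a).+1) -> dist e u v = k.
Proof.
move=> wk k_lt gu0 gvk g_lip; rewrite /dist.
have has_k : has (walk_len e ^~ u ^~ v) (iota 0 #|T|).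
  by apply/hasP; exists k; rewrite ?mem_iota.
have := has_k; rewrite has_find size_iota => find_lt.
apply/eqP; rewrite eqn_leq; apply/andP; split.
- rewrite leqNgt; apply/negP => /(before_find 0).
  by rewrite nth_iota ?add0n // wk.
- have := nth_find 0 has_k; rewrite nth_iota // add0n.
  by move/(walk_len_potential gu0 g_lip); rewrite gvk.
Qed.
End Walks.

Section Ladder.
Variable n : nat.
Hypothesis n_gt1 : 1 < n.

Local Notation V := (LV n).
Local Notation E := (@Ledge n).

Definition hex_pos (a : nat) : nat :=
  match a with 0 | 3 => 2 | 1 | 2 => 3 | _ => 1 end.

Definition pos (v : V) : nat :=
  match v with
  | inl (i, a) => 3 * i + hex_pos a
  | inr s => if s < 2 then 0 else 3 * n - 2
  end.

Definition side (v : V) : bool :=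
  match v with inl (_, a) => 2 <= a <= 4 | inr s => odd s end.

Definition rung (x : nat) : bool := x %% 3 != 2.

Definition ladder_adj (x : nat) (y : bool) (x' : nat) (y' : bool) : bool :=
  (`|x - x'| == 1) && (y == y') || [&& x == x', y != y' & rung x].

Lemma Ledge_ladder u v : E u v = ladder_adj (pos u) (side u) (pos v) (side v).
Proof.
rewrite /Ledge /Ladj /ladder_adj /pos /side /rung.
case: u => [[i [a a6]]|[s s4]]; case: v => [[j [b b6]]|[t t4]] /=.
- have := ltn_ord i; have := ltn_ord j.
  case: a a6 => [|[|[|[|[|[|a]]]]]] a6 //; case: b b6 => [|[|[|[|[|[|b]]]]]] b6 //=;
  by move=> *; apply/idP/idP; lia.
- have := ltn_ord i.
  case: a a6 => [|[|[|[|[|[|a]]]]]] a6 //; case: t t4 => [|[|[|[|t]]]] t4 //=;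
  by move=> *; apply/idP/idP; lia.
- have := ltn_ord j.
  case: b b6 => [|[|[|[|[|[|b]]]]]] b6 //; case: s s4 => [|[|[|[|s]]]] s4 //=;
  by move=> *; apply/idP/idP; lia.
- case: s s4 => [|[|[|[|s]]]] s4 //; case: t t4 => [|[|[|[|t]]]] t4 //=;
  by apply/idP/idP; lia.
Qed.

Lemma pos_le v : pos v <= 3 * n - 2.
Proof.
case: v => [[i [a a6]]|[s s4]] /=; last by case: ifP; lia.
by have := ltn_ord i; case: a a6 => [|[|[|[|[|[|a]]]]]] a6 //=; lia.
Qed.

Lemma pos_side_inj u v : pos u = pos v -> side u = side v -> u = v.
Proof.
case: u => [[i [a a6]]|[s s4]]; case: v => [[j [b b6]]|[t t4]] /=.
- have := ltn_ord i; have := ltn_ord j.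
  case: a a6 => [|[|[|[|[|[|a]]]]]] a6 //; case: b b6 => [|[|[|[|[|[|b]]]]]] b6 //=;
  move=> *; (have ij : i = j by apply: ord_inj; lia); subst j;
  by first [discriminate | lia | congr (inl (_, _)); exact: val_inj].
- by have := ltn_ord i; case: a a6 => [|[|[|[|[|[|a]]]]]] a6 //=; case: ifP; lia.
- by have := ltn_ord j; case: b b6 => [|[|[|[|[|[|b]]]]]] b6 //=; case: ifP; lia.
- case: s s4 => [|[|[|[|s]]]] s4 //; case: t t4 => [|[|[|[|t]]]] t4 //=;
  by rewrite ?ifT ?ifF //; lia || (move=> *; congr inr; exact: val_inj).
Qed.

Lemma card_LV : #|V| = #|{: 'I_(3 * n - 2).+1 * bool}|.
Proof. by rewrite card_sum !card_prod !card_ord card_bool; lia. Qed.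

Definition coord (v : V) : 'I_(3 * n - 2).+1 * bool := (inord (pos v), side v).

Lemma coord_inj : injective coord.
Proof.
move=> u v [/(congr1 (@nat_of_ord _))]; rewrite !inordK ?ltnS ?pos_le //.
exact: pos_side_inj.
Qed.

Definition vertex (x : nat) (y : bool) : V :=
  iinv (inj_card_onto coord_inj (eq_leq (esym card_LV)) (inord x, y)).

Lemma coord_vertex x y : coord (vertex x y) = (inord x, y).
Proof. exact: f_iinv. Qed.

Lemma pos_vertex x y : x <= 3 * n - 2 -> pos (vertex x y) = x.
Proof.
move=> x_le; have [/(congr1 (@nat_of_ord _))] := coord_vertex x y.
by rewrite !inordK ?ltnS ?pos_le.
Qed.

Lemma side_vertex x y : side (vertex x y) = y.
Proof. by have [] := coord_vertex x y. Qed.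

Lemma vertexK v : vertex (pos v) (side v) = v.
Proof. by apply: coord_inj; rewrite coord_vertex. Qed.

Lemma Ledge_vertex x y x' y' : x <= 3 * n - 2 -> x' <= 3 * n - 2 ->
  E (vertex x y) (vertex x' y') = ladder_adj x y x' y'.
Proof. by move=> x_le x'_le; rewrite Ledge_ladder !pos_vertex ?side_vertex. Qed.

Lemma eq_vertex w x y :
  x <= 3 * n - 2 -> (w == vertex x y) = (pos w == x) && (side w == y).
Proof.
move=> x_le; apply/eqP/andP => [->|[/eqP <- /eqP <-]]; last exact/esym/vertexK.
by rewrite pos_vertex ?side_vertex.
Qed.

Lemma Ledge_sym : symmetric E.
Proof. by move=> u v; rewrite /Ledge orbC. Qed.

Lemma walk_side x x' y : x <= 3 * n - 2 -> x' <= 3 * n - 2 ->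
  walk_len E `|x - x'| (vertex x y) (vertex x' y).
Proof.
wlog le_xx' : x x' / x <= x'.
  move=> W x_le x'_le; case: (leqP x x') => [le|/ltnW le]; first exact: W.
  by rewrite distnC; apply: walk_len_sym Ledge_sym (W _ _ le _ _).
move=> _ x'_le; rewrite distnEr // -{2}(subnKC le_xx').
have : x + (x' - x) <= 3 * n - 2 by rewrite subnKC.
elim: (x' - x) => [|d IH] le_d; first by rewrite addn0 walk_len0.
apply: (walk_len_rcons (IH _)); first lia.
by rewrite Ledge_vertex /ladder_adj ?eqxx ?andbT; [apply/orP; left; apply/eqP|..]; lia.
Qed.

Lemma dist_ladder u v : rung (pos u) || rung (pos v) ->
  dist E u v = `|pos u - pos v| + (side u != side v).
Proof.
move=> rung_uv; have u_le := pos_le u; have v_le := pos_le v.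
apply: (dist_eq_potential (g := fun w => `|pos u - pos w| + (side u != side w))) => //.
- suff : walk_len E (`|pos u - pos v| + (side u != side v))
      (vertex (pos u) (side u)) (vertex (pos v) (side v)) by rewrite !vertexK.
  case: (eqVneq (side u) (side v)) => [<-|neq_side] /=; first by rewrite addn0 walk_side.
  rewrite addn1; case/orP: rung_uv => [rung_u|rung_v].
    apply: (walk_len_cons (w := vertex (pos u) (side v))); last exact: walk_side.
    by rewrite Ledge_vertex // /ladder_adj eqxx neq_side rung_u orbT.
  apply: (walk_len_rcons (v := vertex (pos v) (side u))); first exact: walk_side.
  by rewrite Ledge_vertex // /ladder_adj eqxx neq_side rung_v orbT.
- by rewrite card_LV card_prod card_ord card_bool; case: (side u != side v); lia.
- by rewrite distnn eqxx.
- move=> a b; rewrite Ledge_ladder /ladder_adj; have := pos_le a; have := pos_le b.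
  by case: (side a); case: (side b); case: (side u) => /=; lia.
Qed.

Definition ladder_nbrs (v : V) : seq V :=
  (if pos v != 0 then [:: vertex (pos v).-1 (side v)] else [::]) ++
  (if pos v != 3 * n - 2 then [:: vertex (pos v).+1 (side v)] else [::]) ++
  (if rung (pos v) then [:: vertex (pos v) (~~ side v)] else [::]).

Lemma deg_ladder v : deg E v = (pos v != 0) + (pos v != 3 * n - 2) + rung (pos v).
Proof.
have v_le := pos_le v.
have mem_nbrs : [pred w | E v w] =i ladder_nbrs v.
  move=> w; rewrite inE Ledge_ladder /ladder_nbrs /ladder_adj /rung !mem_cat.
  have := pos_le w; case: ifP => ?; case: ifP => ?; case: ifP => ?;
  rewrite ?in_cons ?in_nil ?orbF ?eq_vertex; try lia;
  by case: (side v); case: (side w); lia.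
have uniq_nbrs : uniq (ladder_nbrs v).
  rewrite /ladder_nbrs; case: ifP => ?; case: ifP => ?; case: ifP => ?;
  by rewrite /= ?in_cons ?in_nil ?orbF ?andbT ?eq_vertex ?pos_vertex ?side_vertex //; lia.
rewrite /deg (eq_card mem_nbrs) (card_uniqP uniq_nbrs) /ladder_nbrs !size_cat.
by case: ifP; case: ifP; case: ifP.
Qed.

End Ladder.

Import GRing.Theory.
Local Open Scope ring_scope.

Lemma sum_rank_lt (T : finType) (R : nmodType) (F : T -> T -> R) :
  (forall u, F u u = 0) ->
  \sum_u \sum_(v | (enum_rank u < enum_rank v)%N) (F u v + F v u) = \sum_u \sum_v F u v.
Proof.
move=> F_diag.
under eq_bigr do rewrite big_split /=.
rewrite big_split /= [X in _ + X](exchange_big_dep xpredT) //=.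
rewrite -big_split /=; apply: eq_bigr => u _.
rewrite big_mkcond [X in _ + X]big_mkcond -big_split /=; apply: eq_bigr => v _.
case: ltngtP => [||/val_inj/enum_rank_inj ->]; by rewrite ?addr0 ?add0r ?F_diag.
Qed.

Lemma base_poly_ordered (T : finType) (e : rel T) (p q : nat) :
  p != q -> symmetric e ->
  base_poly e p q = \sum_(u | deg e u == p) \sum_(v | deg e v == q) 'X^(dist e u v).
Proof.
move=> pq sym_e.
pose F u v : {poly int} :=
  if (deg e u == p) && (deg e v == q) then 'X^(dist e u v) else 0.
have -> : base_poly e p q = \sum_u \sum_(v | (enum_rank u < enum_rank v)%N) (F u v + F v u).
  apply: eq_bigr => u _; rewrite big_mkcondr; apply: eq_bigr => v _.
  rewrite /F (dist_sym v u sym_e).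
  case: (deg e u =P p) => [->|_] /=; last by rewrite andbC add0r.
  by rewrite (negPf pq) andbF orbF addr0.
rewrite (@sum_rank_lt _ _ F) => [|u]; last first.
  by rewrite /F; case: (deg e u =P p) => // ->; rewrite (negPf pq).
rewrite [RHS]big_mkcond; apply: eq_bigr => u _; rewrite /F.
case: (deg e u =P p) => _ /=; last by rewrite big1.
by rewrite [RHS]big_mkcond.
Qed.

Section PowerSums.
Variables (R : comPzRingType) (z : R).

Definition geom (c h : nat) : R := \sum_(i < h) z ^+ (3 * i + c).

Definition wgeom (c h : nat) : R := \sum_(i < h) (h - i)%:R * z ^+ (3 * i + c).

Definition rung_dist_sum (x h : nat) : R :=
  \sum_(j < h) (z ^+ `|x - (3 * j + 1)| + z ^+ `|x - (3 * j + 3)|).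

Lemma geom0 c : geom c 0 = 0.
Proof. by rewrite /geom big_ord0. Qed.

Lemma geom_recl c h : geom c h.+1 = z ^+ c + geom (c + 3) h.
Proof.
rewrite /geom big_ord_recl; congr (_ + _); apply: eq_bigr => i _.
by rewrite lift0; congr (_ ^+ _); lia.
Qed.

Lemma mul_geom c h : z * geom c h = geom c.+1 h.
Proof. by rewrite /geom big_distrr; apply: eq_bigr => i _; rewrite addnS exprS. Qed.

Lemma sum_geom c h : \sum_(m < h) geom c m.+1 = wgeom c h.
Proof.
elim: h => [|h IH]; first by rewrite /wgeom !big_ord0.
rewrite big_ord_recr /= IH /wgeom.
have -> : \sum_(i < h.+1) (h.+1 - i)%:R * z ^+ (3 * i + c) =
    \sum_(i < h.+1) (h - i)%:R * z ^+ (3 * i + c) + geom c h.+1.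
  rewrite /geom -big_split; apply: eq_bigr => i _ /=.
  have i_le : (i <= h)%N := ltn_ord i.
  by rewrite (subSn i_le) -addn1 natrD mulrDl mul1r.
by rewrite big_ord_recr /= subnn mul0r addr0.
Qed.

Lemma sum_geom_lt c h : \sum_(m < h) geom c m = wgeom c h - geom c h.
Proof.
apply/eqP; rewrite eq_sym subr_eq -sum_geom -!(big_mkord xpredT) -big_nat_recr //.
by rewrite big_nat_recl //= geom0 add0r big_mkord.
Qed.

Lemma sum_affine_coef (a b c h : nat) (f : 'I_h -> R) :
  (forall i : 'I_h, f i = (a * (h - i) + b)%:R * z ^+ (3 * i + c)) ->
  \sum_(i < h) f i = a%:R * wgeom c h + b%:R * geom c h.
Proof.
move=> f_eq; rewrite /wgeom /geom !big_distrr -big_split; apply: eq_bigr => i _ /=.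
by rewrite f_eq natrD natrM; ring.
Qed.

Lemma rung_dist_sum0 h : rung_dist_sum 0 h = geom 1 h + geom 3 h.
Proof.
rewrite /rung_dist_sum big_split /= /geom.
by congr (_ + _); apply: eq_bigr => j _; rewrite dist0n addnC.
Qed.

Lemma rung_dist_sum_right x h : (3 * h <= x)%N ->
  rung_dist_sum x h = geom (x - 3 * h) h + geom (x - 3 * h + 2) h.
Proof.
move=> hx; rewrite /rung_dist_sum (reindex_inj rev_ord_inj) /geom -big_split /=.
apply: eq_bigr => j _; have := ltn_ord j => j_lt; rewrite [LHS]addrC.
by congr (_ ^+ _ + _ ^+ _); lia.
Qed.

Lemma rung_dist_sumS x h :
  rung_dist_sum x h.+1 =
    rung_dist_sum x h + (z ^+ `|x - (3 * h + 1)| + z ^+ `|x - (3 * h + 3)|).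
Proof. by rewrite /rung_dist_sum big_ord_recr. Qed.

Lemma sum_rung_dist_sum_mid h :
  \sum_(i < h) rung_dist_sum (3 * i + 2) h =
    2%:R * \sum_(m < h) (z + geom 2 m + geom 4 m).
Proof.
elim: h => [|h IH]; first by rewrite !big_ord0 mulr0.
have new_column :
    \sum_(i < h) (z ^+ `|3 * i + 2 - (3 * h + 1)| + z ^+ `|3 * i + 2 - (3 * h + 3)|)
    = geom 2 h + geom 4 h.
  rewrite (reindex_inj rev_ord_inj) /geom -big_split /=.
  by apply: eq_bigr => i _; have := ltn_ord i => i_lt; congr (_ ^+ _ + _ ^+ _); lia.
under eq_bigr do rewrite rung_dist_sumS.
rewrite big_split /= !big_ord_recr /= IH new_column rung_dist_sum_right ?leq_addr //.
have -> : (3 * h + 2 - 3 * h = 2)%N by lia.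
have -> : (`|3 * h + 2 - (3 * h + 1)| = 1)%N by lia.
have -> : (`|3 * h + 2 - (3 * h + 3)| = 1)%N by lia.
ring.
Qed.

Lemma mul_1X_mid_term m :
  (1 + z) * (z + geom 2 m + geom 4 m) = geom 2 m + geom 3 m + geom 1 m.+1 + geom 2 m.+1.
Proof. by rewrite !geom_recl -!mul_geom; ring. Qed.

Lemma ladder_dist_sum_wgeom h :
  (2%:R + 2%:R * z) *
    (rung_dist_sum 0 h + rung_dist_sum (3 * h + 1) h + \sum_(i < h) rung_dist_sum (3 * i + 2) h)
  = 4%:R * (wgeom 1 h + 2%:R * wgeom 2 h + wgeom 3 h + geom 1 h + geom 1 h.+1 - z).
Proof.
rewrite rung_dist_sum0 rung_dist_sum_right ?leq_addr // sum_rung_dist_sum_mid.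
have -> : (3 * h + 1 - 3 * h = 1)%N by lia.
rewrite mulrDr.
have -> : (2%:R + 2%:R * z) * (2%:R * \sum_(m < h) (z + geom 2 m + geom 4 m))
    = 4%:R * \sum_(m < h) (geom 2 m + geom 3 m + geom 1 m.+1 + geom 2 m.+1).
  by rewrite -(eq_bigr _ (fun m _ => mul_1X_mid_term (val m))) -big_distrr /=; ring.
rewrite !big_split /= !sum_geom !sum_geom_lt !geom_recl -!mul_geom.
ring.
Qed.

Lemma closed_form_wgeom n : (1 < n)%N ->
    (4 * n)%:R * z
    + \sum_(2 <= k < n) (4 * (n - k + 2))%:R * z ^+ (3 * k - 2)
    + \sum_(1 <= k < n) (4 * (2 * n - 2 * k))%:R * z ^+ (3 * k - 1)
    + \sum_(1 <= k < n) (4 * (n - k))%:R * z ^+ (3 * k)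
    + 4%:R * z ^+ (3 * n - 2)
  = 4%:R * (wgeom 1 n.-1 + 2%:R * wgeom 2 n.-1 + wgeom 3 n.-1 + geom 1 n.-1 + geom 1 n - z).
Proof.
case: n => [|h] //= h_gt0.
set F := fun k => (4 * (h.+1 - k + 2))%:R * z ^+ (3 * k - 2).
have -> : \sum_(2 <= k < h.+1) F k = \sum_(1 <= k < h.+1) F k - F 1%N.
  by rewrite (big_ltn h_gt0) addrAC subrr add0r.
rewrite /F !big_add1 /= !big_mkord.
rewrite (@sum_affine_coef 4 8 1) => [|i]; last by congr (_%:R * _ ^+ _); lia.
rewrite (@sum_affine_coef 8 0 2) => [|i]; last by congr (_%:R * _ ^+ _); lia.
rewrite (@sum_affine_coef 4 0 3) => [|i]; last by congr (_%:R * _ ^+ _); lia.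
rewrite /geom big_ord_recr /=.
have -> : (3 * h.+1 - 2 = 3 * h + 1)%N by lia.
have -> : (3 * 1 - 2 = 1)%N by [].
have -> : (4 * (h.+1 - 1 + 2) = 4 * h.+1 + 4)%N by lia.
ring.
Qed.
End PowerSums.

Lemma sum_mod3 (R : nmodType) (f : nat -> R) h :
  \sum_(x < 3 * h + 2) f x =
    f 0%N + \sum_(j < h) (f (3 * j + 1)%N + f (3 * j + 2)%N + f (3 * j + 3)%N) + f (3 * h + 1)%N.
Proof.
elim: h => [|h IH]; first by rewrite /= !big_ord_recr !big_ord0 /= add0r addr0.
have -> : (3 * h.+1 + 2 = (3 * h + 2).+3)%N by lia.
have -> : (3 * h.+1 + 1 = (3 * h + 3).+1)%N by lia.
by rewrite !big_ord_recr /= IH -!addnS !addrA.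
Qed.

Section LadderBasePoly.
Variable n : nat.
Hypothesis n_gt1 : (1 < n)%N.

Local Notation V := (LV n).
Local Notation E := (@Ledge n).

Definition deg2_pos (x : nat) : bool := [|| x == 0, x == 3 * n - 2 | ~~ rung x]%N.

Lemma deg_eq2 v : (deg E v == 2)%N = deg2_pos (pos v).
Proof. by rewrite (deg_ladder n_gt1) /deg2_pos /rung; have := pos_le n_gt1 v; lia. Qed.

Lemma deg_eq3 v : (deg E v == 3)%N = ~~ deg2_pos (pos v).
Proof. by rewrite (deg_ladder n_gt1) /deg2_pos /rung; have := pos_le n_gt1 v; lia. Qed.

Lemma deg3_pos_rung x : ~~ deg2_pos x -> rung x.
Proof. by rewrite /deg2_pos !negb_or negbK => /and3P[]. Qed.

Lemma deg2_pos_last : deg2_pos (3 * n.-1 + 1)%N.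
Proof. by rewrite /deg2_pos /rung; lia. Qed.

Lemma deg2_pos_inner j : (j < n.-1)%N ->
  [/\ deg2_pos (3 * j + 1)%N = false, deg2_pos (3 * j + 2)%N & deg2_pos (3 * j + 3)%N = false].
Proof. by rewrite /deg2_pos /rung; split; lia. Qed.

Lemma sum_deg2_pos (R : nmodType) (f : nat -> R) :
  \sum_(x < (3 * n - 2).+1 | deg2_pos x) f x =
    f 0%N + f (3 * n.-1 + 1)%N + \sum_(j < n.-1) f (3 * j + 2)%N.
Proof.
have -> : ((3 * n - 2).+1 = 3 * n.-1 + 2)%N by lia.
rewrite big_mkcond (sum_mod3 (fun x => if deg2_pos x then f x else 0)) /=.
rewrite deg2_pos_last addrAC; congr (_ + _).
by apply: eq_bigr => j _; have [-> -> ->] := deg2_pos_inner (ltn_ord j); rewrite add0r addr0.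
Qed.

Lemma sum_deg3_pos (R : nmodType) (f : nat -> R) :
  \sum_(x < (3 * n - 2).+1 | ~~ deg2_pos x) f x =
    \sum_(j < n.-1) (f (3 * j + 1)%N + f (3 * j + 3)%N).
Proof.
have -> : ((3 * n - 2).+1 = 3 * n.-1 + 2)%N by lia.
rewrite big_mkcond (sum_mod3 (fun x => if ~~ deg2_pos x then f x else 0)) /=.
rewrite deg2_pos_last /= add0r addr0.
by apply: eq_bigr => j _; have [-> -> ->] := deg2_pos_inner (ltn_ord j); rewrite addr0.
Qed.

Lemma sum_ladder (R : nmodType) (F : nat -> bool -> R) :
  \sum_(v : V) F (pos v) (side v) = \sum_(x < (3 * n - 2).+1) (F x false + F x true).
Proof.
have coord_bij : bijective (@coord n).
  exact: inj_card_bij (coord_inj n_gt1) (eq_leq (esym (card_LV n_gt1))).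
apply/esym; rewrite (eq_bigr (fun (x : 'I_(3 * n - 2).+1) => \sum_(y : bool) F x y));
  last by move=> x _; rewrite big_bool addrC.
rewrite pair_big /= (reindex (@coord n)) /=; last exact: onW_bij _ coord_bij.
by apply: eq_bigr => v _; rewrite inordK // ltnS pos_le.
Qed.

Lemma sum_deg3_dist u : deg2_pos (pos u) ->
  \sum_(v | (deg E v == 3)%N) 'X^(dist E u v) =
    (1 + 'X) * rung_dist_sum 'X (pos u) n.-1 :> {poly int}.
Proof.
move=> u_deg2.
have -> : rung_dist_sum 'X (pos u) n.-1 =
    \sum_(x < (3 * n - 2).+1 | ~~ deg2_pos x) 'X^`|pos u - x| :> {poly int}.
  by rewrite (sum_deg3_pos (fun x => 'X^`|pos u - x|)).
rewrite big_distrr /= big_mkcond [RHS]big_mkcond /=.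
pose F x y : {poly int} :=
  if ~~ deg2_pos x then 'X^(`|pos u - x| + (side u != y)) else 0.
rewrite (eq_bigr (fun v => F (pos v) (side v))) => [|v _]; last first.
  rewrite deg_eq3 /F; case: ifP => // v_deg3.
  by rewrite dist_ladder // (deg3_pos_rung v_deg3) orbT.
rewrite sum_ladder; apply: eq_bigr => x _; rewrite /F.
by case: (~~ deg2_pos x); case: (side u); rewrite ?mulr0 ?addr0 // addn0 addn1 exprSr; ring.
Qed.

Lemma base_poly_ladder : base_poly E 2 3 =
  (2%:R + 2%:R * 'X) * (rung_dist_sum 'X 0 n.-1 + rung_dist_sum 'X (3 * n.-1 + 1) n.-1
                        + \sum_(j < n.-1) rung_dist_sum 'X (3 * j + 2) n.-1).
Proof.
have -> : rung_dist_sum 'X 0 n.-1 + rung_dist_sum 'X (3 * n.-1 + 1) n.-1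
    + \sum_(j < n.-1) rung_dist_sum 'X (3 * j + 2) n.-1
    = \sum_(x < (3 * n - 2).+1 | deg2_pos x) rung_dist_sum 'X x n.-1 :> {poly int}.
  by rewrite (sum_deg2_pos (fun x => rung_dist_sum 'X x n.-1 : {poly int})).
rewrite base_poly_ordered //; last exact: Ledge_sym.
pose F x (_ : bool) : {poly int} :=
  if deg2_pos x then (1 + 'X) * rung_dist_sum 'X x n.-1 else 0.
rewrite big_mkcond (eq_bigr (fun u => F (pos u) (side u))) => [|u _]; last first.
  by rewrite deg_eq2 /F; case: ifP => // /sum_deg3_dist.
rewrite sum_ladder big_distrr [RHS]big_mkcond /=; apply: eq_bigr => x _; rewrite /F.
by case: ifP => _; rewrite ?mulr0 ?addr0 //; ring.
Qed.

End LadderBasePoly.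

Theorem theorem2p5 (n : nat) (hn : (2 <= n)%N) :
  base_poly (@Ledge n) 2 3 =
    (4 * n)%:R * 'X
    + \sum_(2 <= k < n) (4 * (n - k + 2))%:R * 'X^(3 * k - 2)
    + \sum_(1 <= k < n) (4 * (2 * n - 2 * k))%:R * 'X^(3 * k - 1)
    + \sum_(1 <= k < n) (4 * (n - k))%:R * 'X^(3 * k)
    + 4%:R * 'X^(3 * n - 2) :> {poly int}.
Proof.
by rewrite base_poly_ladder // ladder_dist_sum_wgeom closed_form_wgeom // prednK ?(ltnW hn).
Qed.
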